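(* Let $n,d,T$ be positive integers and let $\mathbf{s}_1,\dots,\mathbf{s}_T\in\mathbb{R}^n$ be fixed vectors. For an invertible matrix $\mathbf{A}\in\mathbb{R}^{n\times n}$, set $\mathbf{x}_t=\mathbf{A}\mathbf{s}_t$ for $t=1,\dots,T$, and define $$\widehat{\mathbf{M}}_d(\mathbf{A})=\frac{1}{T}\sum_{t=1}^T [\mathbf{x}_t]_d[\mathbf{x}_t]_d^{\top},\qquad \theta_t(\mathbf{A})=[\mathbf{x}_t]_d^{\top}\big(\widehat{\mathbf{M}}_d(\mathbf{A})\big)^{-1}[\mathbf{x}_t]_d,\quad t=1,\dots,T.$$ Assume that $\widehat{\mathbf{M}}_d(\mathbf{I}_n)=\frac{1}{T}\sum_{t=1}^T[\mathbf{s}_t]_d[\mathbf{s}_t]_d^{\top}$ is invertible. Then the scores $(\theta_t(\mathbf{A}))_{t=1}^T$ take values independent of $\mathbf{A}$: for every invertible $\mathbf{A}\in\mathbb{R}^{n\times n}$, $\widehat{\mathbf{M}}_d(\mathbf{A})$ is invertible and $\theta_t(\mathbf{A})=\theta_t(\mathbf{I}_n)=[\mathbf{s}_t]_d^{\top}\big(\widehat{\mathbf{M}}_d(\mathbf{I}_n)\big)^{-1}[\mathbf{s}_t]_d$ for all $t\in\{1,\dots,T\}$.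
   Context: For $\mathbf{x}=(x_1,\dots,x_n)^{\top}\in\mathbb{R}^n$ and $d\in\mathbb{N}$, $[\mathbf{x}]_d$ denotes the column vector of all monomials $x_1^{\alpha_1}\cdots x_n^{\alpha_n}$ of total degree $\alpha_1+\dots+\alpha_n\le d$ (listed in a fixed order), which is a basis of the polynomials in $\mathbf{x}$ of degree at most $d$; its length is $\binom{n+d}{n}$. $\mathbf{I}_n$ is the $n\times n$ identity matrix. *)

From HB Require Import structures.
From mathcomp Require Import all_boot all_order all_algebra.
From mathcomp Require Import reals.
Set Implicit Arguments. Unset Strict Implicit. Unset Printing Implicit Defensive.
Import Order.TTheory GRing.Theory Num.Theory.
Local Open Scope ring_scope.

(* Exponent vectors alpha = (alpha_1,...,alpha_n) of total degree <= d.
   Each alpha_j <= d, so alpha is a finite function 'I_n -> 'I_d.+1. *)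
Definition monexp (n d : nat) : finType :=
  {a : {ffun 'I_n -> 'I_d.+1} | (\sum_(j < n) (a j : nat) <= d)%N}.

Definition nmon (n d : nat) : nat := #|monexp n d|.

Definition mon_at (n d : nat) (i : 'I_(nmon n d)) : {ffun 'I_n -> 'I_d.+1} :=
  val (enum_val i).

Definition monvec {R : comRingType} (n d : nat) (x : 'cV[R]_n) : 'cV[R]_(nmon n d) :=
  \col_(i < nmon n d) \prod_(j < n) x j 0 ^+ (mon_at i j : nat).

Definition Mhat {R : fieldType} (n d T : nat) (x : 'I_T -> 'cV[R]_n)
  : 'M[R]_(nmon n d) :=
  (T%:R)^-1 *: \sum_(t < T) (monvec d (x t) *m (monvec d (x t))^T).

Definition theta {R : fieldType} (n d T : nat) (x : 'I_T -> 'cV[R]_n) (t : 'I_T) : R :=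
  ((monvec d (x t))^T *m invmx (Mhat d x) *m monvec d (x t)) 0 0.

From HB Require Import structures.
From mathcomp Require Import all_boot all_order all_algebra.
From mathcomp Require Import reals.
From mathcomp Require Import zify.
Set Implicit Arguments. Unset Strict Implicit. Unset Printing Implicit Defensive.
Import Order.TTheory GRing.Theory Num.Theory.
Local Open Scope ring_scope.

(* Each monomial of degree at most d in the coordinates of A x is a polynomial
   of degree at most d in x, so [A x]_d = P [x]_d for a matrix P depending
   only on A.  Hence Mhat_d(A) = P Mhat_d(I) P^T.  Applying this to A and to
   A^-1 shows that S := P_(A^-1) P_A satisfies S M S^T = M with M = Mhat_d(I)
   invertible, so det(S)^2 = 1 and P_A is invertible.  The scores are then
   v^T P^T (P M P^T)^-1 P v = v^T M^-1 v with v = [s_t]_d. *)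

Section MonomialsOfLinearImage.
Variables (R : comNzRingType) (n d : nat).
Implicit Types (a b : monexp n d) (x : 'cV[R]_n) (f g : 'cV[R]_n -> R).

Definition monomial a x : R := \prod_(j < n) x j 0 ^+ (val a j : nat).

Definition mdegree a : nat := (\sum_(j < n) (val a j : nat))%N.

Lemma mdegree_le a : (mdegree a <= d)%N.
Proof. exact: valP a. Qed.

Lemma val_le_mdegree a j : (val a j <= mdegree a)%N.
Proof. by rewrite /mdegree (bigD1 j) //= leq_addr. Qed.

(* Only monomials of degree at most d are available, so multiplying by a
   coordinate preserves this predicate only while e < d. *)
Definition poly_deg_le e f := exists c : monexp n d -> R,
  (forall a, (e < mdegree a)%N -> c a = 0) /\
  forall x, f x = \sum_a c a * monomial a x.

Lemma eq_poly_deg_le e f g : f =1 g -> poly_deg_le e f -> poly_deg_le e g.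
Proof. by move=> fg [c [c0 fE]]; exists c; split=> // x; rewrite -fg. Qed.

Lemma poly_deg_le_leq e e' f :
  (e <= e')%N -> poly_deg_le e f -> poly_deg_le e' f.
Proof.
by move=> le_ee' [c [c0 fE]]; exists c; split=> // a /(leq_ltn_trans le_ee')/c0.
Qed.

Lemma poly_deg_le_sum e (l : 'I_n -> R) (F : 'I_n -> 'cV[R]_n -> R) :
  (forall k, poly_deg_le e (F k)) ->
  poly_deg_le e (fun x => \sum_k l k * F k x).
Proof.
move=> /fin_all_exists[c cP]; exists (fun a => \sum_k l k * c k a); split.
  by move=> a lt_ea; rewrite big1 // => k _; rewrite (proj1 (cP k)) // mulr0.
move=> x; under eq_bigr do rewrite (proj2 (cP _)) mulr_sumr.
rewrite exchange_big; apply: eq_bigr => a _; rewrite mulr_suml.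
by apply: eq_bigr => k _; rewrite mulrA.
Qed.

Lemma mexp0_subproof :
  (\sum_(j < n) (([ffun=> ord0] : {ffun 'I_n -> 'I_d.+1}) j : nat) <= d)%N.
Proof. by rewrite big1 // => j _; rewrite ffunE. Qed.

Definition mexp0 : monexp n d :=
  exist (fun e : {ffun 'I_n -> 'I_d.+1} => \sum_(j < n) (e j : nat) <= d)%N _
    mexp0_subproof.

Lemma mdegree0 : mdegree mexp0 = 0%N.
Proof. by rewrite /mdegree big1 // => j _; rewrite ffunE. Qed.

Lemma monomial0 x : monomial mexp0 x = 1.
Proof. by rewrite /monomial big1 // => j _; rewrite ffunE expr0. Qed.

Lemma poly_deg_le1 : poly_deg_le 0 (fun _ => 1).
Proof.
exists (fun a => (a == mexp0)%:R); split.
  by move=> a; case: eqP => // ->; rewrite mdegree0.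
move=> x; rewrite (bigD1 mexp0) //= eqxx mul1r monomial0 big1 ?addr0 //.
by move=> a /negPf->; rewrite mul0r.
Qed.

(* The exponent a + e_k; the junk value a is returned when the degree of
   a + e_k would exceed d. *)
Definition mexp_shift (k : 'I_n) a : monexp n d :=
  insubd a [ffun j => inord (val a j + (j == k))%N].

Section Shift.
Variables (k : 'I_n) (a : monexp n d).
Hypothesis lt_a_d : (mdegree a < d)%N.

Lemma sum_shift_exponents :
  (\sum_(j < n) (val a j + (j == k)) = (mdegree a).+1)%N.
Proof.
rewrite big_split -/(mdegree a) (bigD1 k) //= eqxx big1 ?addn0 ?addn1 //.
by move=> j /negPf->.
Qed.

Lemma mexp_shiftE j : (val (mexp_shift k a) j : nat) = (val a j + (j == k))%N.
Proof.
have entryE i :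
    (inord (val a i + (i == k))%N : 'I_d.+1) = (val a i + (i == k))%N :> nat.
  rewrite inordK // ltnS; have := val_le_mdegree a i.
  by case: (i == k) => /= ?; lia.
rewrite /mexp_shift val_insubd; case: ifP => [_ | /negP[]].
  by rewrite ffunE entryE.
under eq_bigr do rewrite ffunE entryE.
by rewrite sum_shift_exponents.
Qed.

Lemma mdegree_shift : mdegree (mexp_shift k a) = (mdegree a).+1.
Proof.
rewrite /mdegree; under eq_bigr do rewrite mexp_shiftE.
exact: sum_shift_exponents.
Qed.

Lemma monomial_shift x : monomial (mexp_shift k a) x = x k 0 * monomial a x.
Proof.
rewrite /monomial; under eq_bigr do rewrite mexp_shiftE exprD.
rewrite big_split /= mulrC (bigD1 k) //= eqxx expr1 big1 ?mulr1 //.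
by move=> j /negPf->; rewrite expr0.
Qed.

End Shift.

Lemma poly_deg_le_mulx e k f :
  (e < d)%N -> poly_deg_le e f -> poly_deg_le e.+1 (fun x => x k 0 * f x).
Proof.
move=> lt_ed [c [c0 fE]].
exists (fun b => \sum_(a | mexp_shift k a == b) c a); split.
  move=> b lt_eb; rewrite big1 // => a /eqP shift_ab.
  have [le_ae | ] := leqP (mdegree a) e; last exact: c0.
  move: lt_eb; rewrite -shift_ab mdegree_shift ?ltnS ?(leq_ltn_trans le_ae) //.
  by rewrite ltnNge le_ae.
move=> x; rewrite fE mulr_sumr (partition_big (mexp_shift k) xpredT) //=.
apply: eq_bigr => b _; rewrite mulr_suml; apply: eq_bigr => a /eqP <-.
have [le_ae | lt_ea] := leqP (mdegree a) e; last by rewrite c0 // !mul0r mulr0.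
by rewrite monomial_shift ?(leq_ltn_trans le_ae) // mulrCA.
Qed.

Lemma poly_deg_le_linear_mul e (l : 'I_n -> R) f :
  (e < d)%N -> poly_deg_le e f ->
  poly_deg_le e.+1 (fun x => (\sum_k l k * x k 0) * f x).
Proof.
move=> lt_ed pf.
have := poly_deg_le_sum l (fun k => poly_deg_le_mulx k lt_ed pf).
apply: eq_poly_deg_le => x.
by rewrite mulr_suml; apply: eq_bigr => k _; rewrite mulrA.
Qed.

Lemma poly_deg_le_linear_exp_mul e m (l : 'I_n -> R) f :
  (e + m <= d)%N -> poly_deg_le e f ->
  poly_deg_le (e + m) (fun x => (\sum_k l k * x k 0) ^+ m * f x).
Proof.
move=> le_emd pf; elim: m le_emd => [|m IHm] le_emd.
  by rewrite addn0; apply: eq_poly_deg_le pf => x; rewrite expr0 mul1r.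
have lt_emd : (e + m < d)%N by rewrite -addnS.
rewrite addnS; have := poly_deg_le_linear_mul l lt_emd (IHm (ltnW lt_emd)).
by apply: eq_poly_deg_le => x; rewrite exprS mulrA.
Qed.

Lemma poly_deg_le_monomial_mulmx (A : 'M[R]_n) b :
  poly_deg_le d (fun x => monomial b (A *m x)).
Proof.
have prodP (r : seq 'I_n) : (\sum_(j <- r) (val b j : nat) <= d)%N ->
    poly_deg_le (\sum_(j <- r) (val b j : nat))
      (fun x => \prod_(j <- r) (\sum_k A j k * x k 0) ^+ (val b j : nat)).
  elim: r => [_ | j r IHr].
    rewrite big_nil; apply: eq_poly_deg_le poly_deg_le1 => x.
    by rewrite big_nil.
  rewrite big_cons addnC => le_d.
  have le_r_d := leq_trans (leq_addr _ _) le_d.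
  apply: eq_poly_deg_le (poly_deg_le_linear_exp_mul _ le_d (IHr le_r_d)).
  by move=> x; rewrite big_cons.
apply: poly_deg_le_leq (mdegree_le b) _.
apply: eq_poly_deg_le (prodP _ (mdegree_le b)) => x.
by rewrite /monomial; apply: eq_bigr => j _; rewrite mxE.
Qed.

Lemma monvec_mulmx (A : 'M[R]_n) :
  exists P : 'M[R]_(nmon n d), forall x, monvec d (A *m x) = P *m monvec d x.
Proof.
have /fin_all_exists[c cP] (i : 'I_(nmon n d)) : exists c : monexp n d -> R,
    forall x, monomial (enum_val i) (A *m x) = \sum_a c a * monomial a x.
  by have [c [_ cE]] := poly_deg_le_monomial_mulmx A (enum_val i); exists c.
exists (\matrix_(i, i') c i (enum_val i')) => x; apply/matrixP => i j.
rewrite ord1 !mxE [LHS](cP i) (big_enum_val (fun a => c i a * monomial a x)).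
by apply: eq_bigr => i' _; rewrite !mxE.
Qed.

End MonomialsOfLinearImage.

Section Congruence.
Variables (R : comUnitRingType) (m : nat).
Implicit Types (M P S : 'M[R]_m).

Lemma unitmx_congr_fixed M S :
  M \in unitmx -> S *m M *m S^T = M -> S \in unitmx.
Proof.
move=> Mu /(congr1 determinant); rewrite !det_mulmx det_tr mulrAC -[RHS]mul1r.
move/(mulIr Mu) => detS2; rewrite unitmxE.
by apply/unitrP; exists (\det S); rewrite detS2.
Qed.

Lemma congr_invmx M P : P \in unitmx -> M \in unitmx ->
  P^T *m invmx (P *m M *m P^T) *m P = invmx M.
Proof.
move=> Pu Mu; set N := P *m M *m P^T.
have PTu : P^T \in unitmx by rewrite unitmx_tr.
have Nu : N \in unitmx by rewrite !unitmx_mul Pu Mu PTu.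
have : P^T *m invmx N *m P *m M = 1%:M.
  apply: (can_inj (mulmxK PTu)) => /=.
  by rewrite mul1mx -[RHS]mulmx1 -(mulVmx Nu) /N !mulmxA.
by move/(congr1 (mulmx^~ (invmx M))); rewrite mul1mx mulmxK.
Qed.

End Congruence.

Section Scores.
Variables (R : fieldType) (n d T : nat).
Implicit Types (x y : 'I_T -> 'cV[R]_n) (P : 'M[R]_(nmon n d)).

Lemma Mhat_monvec_transform x y P :
  (forall t, monvec d (y t) = P *m monvec d (x t)) ->
  Mhat d y = P *m Mhat d x *m P^T.
Proof.
move=> yE; rewrite /Mhat -scalemxAr -scalemxAl mulmx_sumr mulmx_suml.
by congr (_ *: _); apply: eq_bigr => t _; rewrite yE trmx_mul !mulmxA.
Qed.

Lemma theta_monvec_transform x y P t :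
  (forall t, monvec d (y t) = P *m monvec d (x t)) ->
  P \in unitmx -> Mhat d x \in unitmx -> theta d y t = theta d x t.
Proof.
move=> yE Pu Mu; rewrite /theta (Mhat_monvec_transform yE) yE.
by rewrite -(congr_invmx Pu Mu) trmx_mul !mulmxA.
Qed.

End Scores.

Theorem proposition1 (R : realType) (n d T : nat)
  (hn : (0 < n)%N) (hd : (0 < d)%N) (hT : (0 < T)%N)
  (s : 'I_T -> 'cV[R]_n)
  (hM : Mhat d (fun t => 1%:M *m s t) \in unitmx) :
  forall A : 'M[R]_n, A \in unitmx ->
    Mhat d (fun t => A *m s t) \in unitmx /\
    forall t : 'I_T,
      theta d (fun t => A *m s t) t = theta d (fun t => 1%:M *m s t) t /\
      theta d (fun t => 1%:M *m s t) t =
        ((monvec d (s t))^T *m invmx (Mhat d s) *m monvec d (s t)) 0 0.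
Proof.
move=> A Au.
have [P PE] := monvec_mulmx d A.
have [Q QE] := monvec_mulmx d (invmx A).
have idE t : monvec d (1%:M *m s t) = 1%:M *m monvec d (s t) by rewrite !mul1mx.
have AE t : monvec d (A *m s t) = P *m monvec d (s t) by exact: PE.
have Mu : Mhat d s \in unitmx.
  by move: hM; rewrite (Mhat_monvec_transform idE) trmx1 mulmx1 mul1mx.
have QPu : Q *m P \in unitmx.
  apply/(unitmx_congr_fixed Mu)/esym/Mhat_monvec_transform => t.
  by rewrite -mulmxA -PE -QE mulmxA mulVmx // mul1mx.
have Pu : P \in unitmx by move: QPu; rewrite unitmx_mul => /andP[].
split; first by rewrite (Mhat_monvec_transform AE) !unitmx_mul unitmx_tr Pu Mu.
move=> t; rewrite (theta_monvec_transform _ AE Pu Mu).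
by rewrite (theta_monvec_transform _ idE (unitmx1 _ _) Mu).
Qed.
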